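(* Let $(Q,\mathcal S)$ be a hypergraph with $Q=\{q_1,\dots,q_m\}$ and $\mathcal S=\{S_1,\dots,S_n\}$, where $n\ge 2$, every $S_j$ is a nonempty subset of $Q$, and $S_n=Q$. Let $G'$ be the graph constructed from $(Q,\mathcal S)$ as follows. Its vertex set consists of the vertices $q_1,\dots,q_m$; vertices $S_1,\dots,S_n$; vertices $S_1',\dots,S_n'$; a vertex $q^i_j$ for every pair $(i,j)$ with $q_i\in S_j$ (let $Q'$ be the set of these); and vertices $u_1,v,w,x$. Its edges are: $q^i_jq_i$ and $q^i_jS_j$ for every $q^i_j\in Q'$; $q_iS_j'$ whenever $q_i\in S_j$; $S_jS_k'$ for all $j,k\in\{1,\dots,n\}$; $u_1S_j$ for every $j$; $u_1v$; $wS_j'$ for every $j$; and $xv$, $xw$. Then $G'$ is bipartite. *)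

From mathcomp Require Import all_boot.
Set Implicit Arguments. Unset Strict Implicit. Unset Printing Implicit Defensive.

(* Hypergraph (Q,S): Q = 'I_m (q_i is index i), S : 'I_n -> {set 'I_m}
   (S_j is S j).  Vertices of the constructed graph G'. *)
Inductive gvert (m n : nat) : Type :=
| Vq   of 'I_m
| VS   of 'I_n
| VS'  of 'I_n
| Vqij of 'I_m & 'I_n     (* q^i_j, only a vertex when q_i \in S_j *)
| Vu1 | Vv | Vw | Vx.

Arguments Vu1 {m n}. Arguments Vv {m n}. Arguments Vw {m n}. Arguments Vx {m n}.

Definition G'_vertex m n (S : 'I_n -> {set 'I_m}) (a : gvert m n) : Prop :=
  match a with
  | Vqij i j => i \in S j
  | _ => True
  end.

Definition G'_gen_edge m n (S : 'I_n -> {set 'I_m}) (a b : gvert m n) : Prop :=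
  match a, b with
  | Vqij i j, Vq i' => i \in S j /\ i' = i
  | Vqij i j, VS j' => i \in S j /\ j' = j
  | Vq i, VS' j => i \in S j
  | VS _, VS' _ => True
  | Vu1, VS _ => True
  | Vu1, Vv => True
  | Vw, VS' _ => True
  | Vx, Vv => True
  | Vx, Vw => True
  | _, _ => False
  end.

Definition G'_edge m n (S : 'I_n -> {set 'I_m}) (a b : gvert m n) : Prop :=
  G'_gen_edge S a b \/ G'_gen_edge S b a.

Definition bipartite (V : Type) (vert : V -> Prop) (edge : V -> V -> Prop) : Prop :=
  exists c : V -> bool, forall a b, vert a -> vert b -> edge a b -> c a <> c b.

From mathcomp Require Import all_boot.
Set Implicit Arguments. Unset Strict Implicit. Unset Printing Implicit Defensive.

(* The colour classes are {q_i, S_j, v, w} and {S_j', q^i_j, u_1, x}: every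
   generating edge joins the two classes, whatever the hypergraph is. *)

Definition gvert_side m n (a : gvert m n) : bool :=
  match a with
  | Vq _ | VS _ | Vv | Vw => true
  | VS' _ | Vqij _ _ | Vu1 | Vx => false
  end.

Lemma G'_gen_edge_side m n (S : 'I_n -> {set 'I_m}) (a b : gvert m n) :
  G'_gen_edge S a b -> gvert_side a <> gvert_side b.
Proof. by case: a; case: b. Qed.

Lemma G'_edge_side m n (S : 'I_n -> {set 'I_m}) (a b : gvert m n) :
  G'_edge S a b -> gvert_side a <> gvert_side b.
Proof. by case=> /G'_gen_edge_side side_ab // /esym. Qed.

Theorem lemma5 (m n : nat) (S : 'I_n -> {set 'I_m})
  (Hn : 2 <= n)
  (Hne : forall j : 'I_n, S j != set0)
  (Hlast : forall j : 'I_n, nat_of_ord j = n.-1 -> S j = [set: 'I_m]) :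
  bipartite (G'_vertex S) (G'_edge S).
Proof.
by exists (@gvert_side m n) => a b _ _ /G'_edge_side.
Qed.
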